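(* Let $p>2$ be a prime number. Let $n\geq 0$ and $m\geq 1$ be integers, let $G$ be a finite $p$-group, let $f\in\mathcal{F}_G$, and let $H, C_1, C_2,\ldots, C_{p-1}$ be normal subgroups of $G$ such that: (1) $C_i\subsetneq H$ for all $1\leq i\leq p-1$; (2) $\displaystyle\max_{g\in H\setminus\left(\bigcup_{i=1}^{p-1}C_i\right)} b_{f(H,m)}(g)\leq n$. Then there exists a normal subgroup $N$ of $G$ such that: (a) $N\subseteq H$; (b) $\log_p|H:N|\leq n$; (c) $cl_f(N)\leq n+m$; (d) $N\not\subseteq\bigcup_{i=1}^{p-1}C_i$.
   Context: For a finite group $G$, $Z_G(x)$ is the centralizer of $x$ in $G$, and for a subset (or subgroup) $H$, $Z_G(H)=\bigcap_{h\in H}Z_G(h)$. Commutators are $[x,y]=x^{-1}y^{-1}xy$, and for subgroups $G_1,G_2$, $[G_1,G_2]$ is the subgroup generated by all $[g_1,g_2]$ with $g_i\in G_i$. For $g\in G$ and a subgroup $K$ of $G$, $b_K(g):=\log_p|K : K\cap Z_G(g)|$. $\mathcal{F}_G$ denotes the set of all functions $f$ from (normal subgroups of $G$) $\times\,\mathbb{N}_{\geq1}$ to (normal subgroups of $G$) such that: (i) $f(N,i)\subseteq f(M,j)$ whenever $N\subseteq M$ are normal subgroups of $G$ and $1\leq j\leq i$; (ii) $[N,f(N,i)]\neq[N,f(N,i+1)]$ for every normal subgroup $N$ of $G$ and every integer $i\geq1$ with $f(N,i)\not\subseteq Z_G(N)$. For $f\in\mathcal{F}_G$ and a normal subgroup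 $N$ of $G$, $cl_f(N):=\min\{n\in\mathbb{N} : f(N,n)\subseteq Z_G(N)\}$. *)

From mathcomp Require Import all_boot all_fingroup all_solvable.
Set Implicit Arguments. Unset Strict Implicit. Unset Printing Implicit Defensive.
Local Open Scope group_scope.

(* Z_G(N) is 'C_G(N); [G1,G2] is [~: G1, G2]. *)

Definition bK (gT : finGroupType) (p : nat) (G K : {set gT}) (g : gT) : nat :=
  logn p #|K : K :&: 'C_G[g]|.

(* f ∈ F_G.  f is given on all subgroups and all naturals; only its values
   on normal subgroups of G and indices i >= 1 matter. *)
Definition in_FG (gT : finGroupType) (G : {group gT})
    (f : {group gT} -> nat -> {group gT}) : Prop :=
  [/\ (forall (N : {group gT}) i, N <| G -> 0 < i -> f N i <| G),
      (forall (N M : {group gT}) i j, N <| G -> M <| G -> N \subset M ->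
          0 < j -> j <= i -> f N i \subset f M j)
    & (forall (N : {group gT}) i, N <| G -> 0 < i ->
          ~~ (f N i \subset 'C_G(N)) ->
          [~: N, f N i] != [~: N, f N i.+1])].

(* "cl_f(N) <= k", i.e. min {n >= 1 : f(N,n) ⊆ Z_G(N)} <= k *)
Definition clf_le (gT : finGroupType) (G : {group gT})
    (f : {group gT} -> nat -> {group gT}) (N : {group gT}) (k : nat) : Prop :=
  exists2 i, 0 < i <= k & f N i \subset 'C_G(N).

From mathcomp Require Import all_boot all_fingroup all_solvable.
Set Implicit Arguments. Unset Strict Implicit. Unset Printing Implicit Defensive.
Local Open Scope group_scope.

(* Induction on n, generalizing m, H and the C_i.  If f(H,m) centralizes H (as the bound
   forces when n = 0), N = H works, because a p-group is never the union of p proper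
   subgroups.  Otherwise the h in H with [h, f(H,m)] <= [H, f(H,m+1)] form a subgroup A,
   normal in G and proper in H by condition (ii) on f; for g in H outside A the index
   b_{f(H,m+1)}(g) is smaller than b_{f(H,m)}(g), since otherwise
   f(H,m) <= f(H,m+1) Z_G(g), forcing g in A.  Choose M >= A and Y >= C_1 normal of
   index p in H and x in H outside M, Y, C_2, ..., C_{p-1}.  Then N' = (M /\ Y)<x> is
   normal in G (it contains [H,G]), has index at most p in H, and meets M \/ Y only in
   M /\ Y, as x^j lies in M iff p | j iff it lies in Y.  The induction hypothesis for
   n-1, m+1, N' and the subgroups M /\ Y, N' /\ C_2, ..., N' /\ C_{p-1} yields N. *)

Lemma leq_logn_pnat p a b : prime p -> p.-nat a -> p.-nat b ->
  (logn p a <= logn p b)%N = (a <= b)%N.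
Proof.
by move=> p_pr /p_natP[i ->] /p_natP[j ->]; rewrite !pfactorK // leq_exp2l ?prime_gt1.
Qed.

Lemma pnat_gt1_geq p a : prime p -> p.-nat a -> (1 < a)%N -> (p <= a)%N.
Proof.
move=> p_pr /p_natP[[|i] ->]; rewrite ?expn0 // => _.
by rewrite -[p in (p <= _)%N]expn1 leq_exp2l ?prime_gt1.
Qed.

Lemma leq_card_bigcup (I T : finType) (P : pred I) (A : I -> {set T}) :
  (#|\bigcup_(i | P i) A i| <= \sum_(i | P i) #|A i|)%N.
Proof.
apply: (big_ind2 (fun (U : {set T}) n => #|U| <= n)%N) => [|U m V n leUm leVn|//].
  by rewrite cards0.
exact: leq_trans (leq_card_setU U V) (leq_add leUm leVn).
Qed.

Section PGroupFacts.

Variables (gT : finGroupType) (p : nat).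
Hypothesis p_pr : prime p.
Implicit Types G H K N X Y : {group gT}.

Lemma leq_indexSg (A B : {set gT}) H : A \subset B -> (#|A : H| <= #|B : H|)%N.
Proof. by move=> sAB; apply/subset_leq_card/imsetS. Qed.

Lemma pnat_index G H K : p.-group G -> H \subset G -> p.-nat #|H : K|.
Proof. by move=> pG sHG; apply: pnat_dvd (dvdn_indexg H K) (pgroupS sHG pG). Qed.

Lemma bKS G K1 K2 g : p.-group G -> K1 \subset K2 -> K2 \subset G ->
  (bK p G K1 g <= bK p G K2 g)%N.
Proof.
move=> pG sK12 sK2G; rewrite /bK !indexgI leq_logn_pnat ?leq_indexSg //.
  exact: pnat_index pG (subset_trans sK12 sK2G).
exact: pnat_index pG sK2G.
Qed.

Lemma bK_eq0 G K g : p.-group G -> K \subset G -> (bK p G K g == 0) = (K \subset 'C_G[g]).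
Proof.
move=> pG sKG; rewrite /bK indexgI -leqn0 -(logn1 p) leq_logn_pnat ?pnat1 //.
  by rewrite -indexg_eq1 eqn_leq indexg_gt0 andbT.
exact: pnat_index pG sKG.
Qed.

Lemma bK_le_sub_mulg G K K' g : p.-group G -> K' \subset K -> K \subset G ->
  (bK p G K g <= bK p G K' g)%N -> K \subset K' * 'C_G[g].
Proof.
move=> pG sK'K sKG; have pK' := pnat_index 'C_G[g] pG (subset_trans sK'K sKG).
rewrite /bK !indexgI leq_logn_pnat ?(pnat_index _ pG sKG) // => le_KK'.
suff ->: K' * 'C_G[g] = K * 'C_G[g] by apply: mulG_subl.
by apply/eqP; rewrite eqEcard mulSg //= -!LagrangeMr leq_mul2r le_KK' orbT.
Qed.

Lemma commg_mem_of_bK_le G K K' (B : {set gT}) g :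
    p.-group G -> K' \subset K -> K \subset G -> G \subset 'N(B) ->
    (bK p G K g <= bK p G K' g)%N ->
  {in K', forall k, [~ g, k] \in B} -> {in K, forall k, [~ g, k] \in B}.
Proof.
move=> pG sK'K sKG nBG le_bK gK'B k Kk.
have /mulsgP[k' c K'k' /setIP[Gc /cent1P cgc] ->] :=
  subsetP (bK_le_sub_mulg pG sK'K sKG le_bK) k Kk.
have gc1 : [~ g, c] = 1 by apply/eqP/commgP.
by rewrite commgMJ gc1 mul1g memJ_norm ?gK'B ?(subsetP nBG).
Qed.

Lemma proper_pgroup_card H X : p.-group H -> X \proper H -> (#|X| * p <= #|H|)%N.
Proof.
move=> pH /andP[sXH not_sHX]; rewrite -(Lagrange sXH) leq_mul2l.
by rewrite pnat_gt1_geq ?orbT ?(pnat_index _ pH) ?indexg_gt1.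
Qed.

Lemma pgroup_cover_proper H (X : nat -> {group gT}) : p.-group H ->
    (forall i, (i < p)%N -> X i \proper H) ->
  exists2 x, x \in H & forall i, (i < p)%N -> x \notin X i.
Proof.
move=> pH ltXH.
pose outside x := (x \in H) && [forall i : 'I_p, x \notin X i].
have [x /andP[Hx /forallP X'x] | cover] := pickP outside.
  by exists x => // i lt_ip; apply: (X'x (Ordinal lt_ip)).
exfalso.
have sH1X : H :\ 1 \subset \bigcup_(i < p) (X i :\ 1).
  apply/subsetP=> x /setD1P[x_ne1 Hx]; have /negbT := cover x.
  rewrite /outside Hx negb_forall => /existsP[i /negbNE Xix].
  by apply/bigcupP; exists i => //; apply/setD1P.
have sum_X1 : (\sum_(i < p) #|X i :\ 1%g| + p = \sum_(i < p) #|X i|)%N.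
  transitivity (\sum_(i < p) (#|X i :\ 1%g| + 1))%N.
    by rewrite big_split /= sum_nat_const card_ord muln1.
  by apply: eq_bigr => i _; rewrite (cardsD1 1%g (X i)) group1 addnC.
have sum_X : (\sum_(i < p) #|X i| <= #|H|)%N.
  rewrite -(leq_pmul2r (prime_gt0 p_pr)) big_distrl /=.
  have -> : (#|H| * p = \sum_(i < p) #|H|)%N by rewrite sum_nat_const card_ord mulnC.
  by apply: leq_sum => i _; apply: proper_pgroup_card pH (ltXH i (ltn_ord i)).
have le_H1 : (#|H :\ 1%g|.+1 <= (\sum_(i < p) #|X i :\ 1%g|).+1)%N.
  by rewrite ltnS; apply: leq_trans (subset_leq_card sH1X) (leq_card_bigcup _ _).
rewrite (cardsD1 1%g H) group1 add1n -sum_X1 in sum_X.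
by have := leq_trans sum_X le_H1; rewrite -addn1 leq_add2l leqNgt prime_gt1.
Qed.

Lemma normal_index_prime_between G H X : p.-group G -> H <| G -> X <| G -> X \proper H ->
  exists Y : {group gT}, [/\ Y <| G, X \subset Y, Y \subset H & #|H : Y| = p].
Proof.
move=> pG nsHG nsXG ltXH; have [sHG _] := andP nsHG; have nXG := normal_norm nsXG.
have nXH := subset_trans sHG nXG; have sXH := proper_sub ltXH.
have ntHX : H / X != 1 by rewrite -subG1 quotient_sub1 //; case/andP: ltXH.
have [_ _ [r oHX]] := pgroup_pdiv (quotient_pgroup X (pgroupS sHG pG)) ntHX.
have [Q [sQHX nsQ oQ]] : exists Q : {group coset_of X},
    [/\ Q \subset H / X, Q <| G / X & #|Q| = p ^ r]%N.
  apply: normal_pgroup (quotient_pgroup X pG) (quotient_normal X nsHG) _.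
  by rewrite oHX pfactorK.
have [Y defQ sXY nsYG] := inv_quotientN nsXG nsQ.
have nXY := subset_trans (normal_sub nsYG) nXG.
have sYH : Y \subset H by rewrite -(quotientSGK nXY sXH) -defQ.
exists Y; split=> //; apply/eqP.
rewrite -(eqn_pmul2r (_ : 0 < p ^ r)%N) ?expn_gt0 ?prime_gt0 // -{1}oQ defQ.
by rewrite !card_quotient // Lagrange_index // -card_quotient // oHX expnS.
Qed.

Lemma index_prime_commg_sub G H Y : p.-group G -> H <| G -> Y <| G ->
  #|H : Y| = p -> [~: H, G] \subset Y.
Proof.
move=> pG nsHG nsYG iHY; have [sHG _] := andP nsHG; have nYG := normal_norm nsYG.
have nYH := subset_trans sHG nYG.
have oHY : #|H / Y| = p by rewrite card_quotient.
have ntHY : H / Y != 1 by rewrite -cardG_gt1 oHY prime_gt1.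
have nilGY : nilpotent (G / Y) := pgroup_nil (quotient_pgroup Y pG).
have sHYZ : H / Y \subset 'Z(G / Y).
  by apply: prime_meetG; rewrite ?oHY // meet_center_nil ?quotient_normal.
by rewrite -quotient_cents2 // (subset_trans sHYZ) ?subsetIr.
Qed.

Lemma expg_mem_index_prime H Y x j : H \subset 'N(Y) -> #|H : Y| = p ->
  x \in H -> x \notin Y -> (x ^+ j \in Y) = (p %| j).
Proof.
move=> nYH iHY Hx Y'x; have Nx := subsetP nYH x Hx.
have oxY : #[coset Y x] = p.
  have: #[coset Y x] %| p by rewrite -iHY -card_quotient // order_dvdG ?mem_quotient.
  case/primeP: p_pr => _ /[apply] /orP[|/eqP//].
  by rewrite order_eq1 => /eqP/(coset_idr Nx) Yx; rewrite Yx in Y'x.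
rewrite -oxY order_dvdn -morphX //.
by apply/idP/eqP => [/coset_id // | /(coset_idr (groupX j Nx))].
Qed.

Lemma join_cycle_cap_index_prime H Y1 Y2 x :
    H \subset 'N(Y1) -> H \subset 'N(Y2) -> #|H : Y1| = p -> #|H : Y2| = p ->
    x \in H -> x \notin Y1 -> x \notin Y2 ->
  ((Y1 :&: Y2) <*> <[x]>) :&: (Y1 :|: Y2) \subset Y1 :&: Y2.
Proof.
move=> nY1H nY2H iHY1 iHY2 Hx Y1'x Y2'x.
have nWx : <[x]> \subset 'N(Y1 :&: Y2) by rewrite cycle_subG (subsetP (normsI nY1H nY2H)).
rewrite norm_joinEr //; apply/subsetP=> _ /setIP[/mulsgP[w _ W_w /cycleP[j ->] ->]].
have [Y1w Y2w] := setIP W_w.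
rewrite !inE !groupMl // !(expg_mem_index_prime _ _ _ Hx) //.
by rewrite orbb andbb.
Qed.

Lemma commg_sub_normal G H N : H \subset G -> [~: H, G] \subset N -> N \subset H -> N <| G.
Proof.
move=> sHG sHG_N sNH; rewrite /normal (subset_trans sNH sHG) -commg_subl.
exact: subset_trans (commSg G sNH) sHG_N.
Qed.

Lemma logn_index_join_cycle G H Y1 Y2 x : p.-group G -> H \subset G -> Y1 \subset H ->
    #|H : Y1| = p -> #|H : Y2| = p -> x \in H -> x \notin Y1 ->
  (logn p #|H : (Y1 :&: Y2) <*> <[x]>| <= 1)%N.
Proof.
move=> pG sHG sY1H iHY1 iHY2 Hx Y1'x.
set W := (Y1 :&: Y2)%G; set N := (W <*> <[x]>)%G.
have sWY1 : W \subset Y1 := subsetIl Y1 Y2.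
have sWN : W \subset N := joing_subl W <[x]>.
have Nx : x \in N := subsetP (joing_subr W <[x]>) x (cycle_id x).
have sNH : N \subset H by rewrite join_subG cycle_subG Hx (subset_trans sWY1 sY1H).
have le_p_NW : (p <= #|N : W|)%N.
  rewrite pnat_gt1_geq ?(pnat_index _ pG (subset_trans sNH sHG)) // indexg_gt1.
  by apply/subsetPn; exists x; rewrite // inE negb_and Y1'x.
have le_Y1W_p : (#|Y1 : W| <= p)%N by rewrite indexgI -iHY2 leq_indexSg.
have : (#|H : N| * p <= p * p)%N.
  apply: leq_trans (leq_mul (leqnn _) le_p_NW) _.
  by rewrite Lagrange_index // -(Lagrange_index sY1H sWY1) iHY1 leq_mul2l le_Y1W_p orbT.
rewrite leq_mul2r (gtn_eqF (prime_gt0 p_pr)) /= => le_HN_p.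
by rewrite -(pfactorK 1 p_pr) expn1 leq_logn_pnat ?pnat_id ?(pnat_index _ pG sHG).
Qed.

Definition avoids (C : nat -> {group gT}) x := forall i, (0 < i < p)%N -> x \notin C i.

Lemma exists_avoids H Y (C : nat -> {group gT}) : p.-group H -> Y \proper H ->
  (forall i, (0 < i < p)%N -> C i \proper H) -> exists2 x, x \in H :\: Y & avoids C x.
Proof.
move=> pH ltYH ltCH.
have [|x Hx X'x] := pgroup_cover_proper (X := fun i => if i == 0 then Y else C i) pH.
  by case=> [|i] //= lt_ip; apply: ltCH.
exists x; first by rewrite inE Hx andbT; apply: (X'x 0); rewrite prime_gt0.
by case=> [|i] // /andP[_ lt_ip]; apply: (X'x i.+1).
Qed.

Lemma commg_stab_normal G H K (B : {group gT}) : H <| G -> K <| G -> G \subset 'N(B) ->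
  exists2 A : {group gT}, A <| G &
    forall h, (h \in A) = (h \in H) && [forall k in K, [~ h, k] \in B].
Proof.
move=> nsHG nsKG nBG; have [sHG nHG] := andP nsHG; have nKG := normal_norm nsKG.
set A := [set h in H | [forall k in K, [~ h, k] \in B]].
have gA : group_set A.
  apply/group_setP; split=> [|a b].
    by rewrite inE group1; apply/forall_inP=> k _; rewrite comm1g group1.
  rewrite !inE => /andP[Ha /forall_inP aB] /andP[Hb /forall_inP bB].
  rewrite groupM //; apply/forall_inP => k Kk; rewrite commMgJ groupM ?bB //.
  by rewrite memJ_norm ?aB // (subsetP nBG) // (subsetP sHG).
exists (Group gA) => [|h]; last by rewrite /= inE.
rewrite /normal; apply/andP; split.
  by apply/subsetP=> h; rewrite inE => /andP[/(subsetP sHG)].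
apply/subsetP=> y Gy; rewrite inE; apply/subsetP=> _ /imsetP[h Ah ->].
move: Ah; rewrite !inE => /andP[Hh /forall_inP hB].
rewrite memJ_norm ?(subsetP nHG) // Hh; apply/forall_inP=> k Kk.
rewrite -(conjgKV y k) -conjRg memJ_norm ?(subsetP nBG) // hB //.
by rewrite memJ_norm ?(subsetP nKG) ?groupV.
Qed.

End PGroupFacts.

Section ClassBound.

Variables (gT : finGroupType) (p : nat) (G : {group gT}).
Variable f : {group gT} -> nat -> {group gT}.
Hypotheses (p_pr : prime p) (pG : p.-group G) (fG : in_FG G f).
Implicit Types (H M N : {group gT}) (C : nat -> {group gT}).

Definition proper_normal_family H C := forall i, (0 < i < p)%N -> C i <| G /\ C i \proper H.

Definition bK_bounded n m H C :=
  forall g, g \in H -> avoids p C g -> (bK p G (f H m) g <= n)%N.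

Lemma exists_clf_le_subgroup_central n k m H C : (0 < m <= k)%N -> H <| G ->
    proper_normal_family H C -> f H m \subset 'C_G(H) ->
  exists N : {group gT}, [/\ N <| G, N \subset H, (logn p #|H : N| <= n)%N,
    clf_le G f N k & exists2 x, x \in N & avoids p C x].
Proof.
move=> le_m_k nsHG famC cHf; have pH := pgroupS (normal_sub nsHG) pG.
have lt1p : (0 < 1 < p)%N by rewrite prime_gt1.
have ltCH i : (0 < i < p)%N -> C i \proper H by case/famC.
have [x /setDP[Hx _] C'x] := exists_avoids p_pr pH (ltCH 1%N lt1p) ltCH.
by exists H; split=> //; [rewrite indexgg logn1 | exists m | exists x].
Qed.

Lemma central_of_bK_bounded0 m H C : (0 < m)%N -> H <| G -> proper_normal_family H C ->
  bK_bounded 0 m H C -> f H m \subset 'C_G(H).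
Proof.
move=> m_gt0 nsHG famC bound; have [sHG _] := andP nsHG; have pH := pgroupS sHG pG.
have [f_normal _ _] := fG; have sfG := normal_sub (f_normal H m nsHG m_gt0).
rewrite subsetI sfG centsC /=; apply/idPn=> not_cHf.
have ltCH : 'C_H(f H m) \proper H by rewrite properE subsetIl subsetI subxx.
have ltCiH i : (0 < i < p)%N -> C i \proper H by case/famC.
have [x /setDP[Hx C'x] avoids_x] := exists_avoids p_pr pH ltCH ltCiH.
have := bound x Hx avoids_x; rewrite leqn0 bK_eq0 // => cfx.
by case/negP: C'x; rewrite inE Hx -sub_cent1 (subset_trans cfx) ?subsetIr.
Qed.

Lemma exists_index_prime_bK_drop n m H C : (0 < m)%N -> H <| G ->
    bK_bounded n.+1 m H C -> ~~ (f H m \subset 'C_G(H)) ->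
  exists M : {group gT}, [/\ M <| G, M \subset H, #|H : M| = p &
    forall g, g \in H :\: M -> avoids p C g -> (bK p G (f H m.+1) g <= n)%N].
Proof.
move=> m_gt0 nsHG bound not_cHf; have [f_normal f_mono f_strict] := fG.
have nsfG := f_normal H m nsHG m_gt0; have nsf'G := f_normal H m.+1 nsHG isT.
have sf'f : f H m.+1 \subset f H m := f_mono H H m.+1 m nsHG nsHG (subxx H) m_gt0 (leqnSn m).
have nBG : G \subset 'N([~: H, f H m.+1]) by rewrite normsR ?normal_norm.
have [A nsAG defA] := commg_stab_normal nsHG nsfG nBG.
have sAH : A \subset H by apply/subsetP=> h; rewrite defA => /andP[].
have ltAH : A \proper H.
  rewrite properE sAH; apply: contra (f_strict H m nsHG m_gt0 not_cHf) => sHA.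
  rewrite eqEsubset (commgS _ sf'f) andbT gen_subG.
  apply/subsetP=> _ /imset2P[h k Hh fk ->].
  by move: (subsetP sHA h Hh); rewrite defA => /andP[_ /forall_inP->].
have [M [nsMG sAM sMH iHM]] := normal_index_prime_between p_pr pG nsHG nsAG ltAH.
exists M; split=> // g /setDP[Hg M'g] avoids_g; rewrite leqNgt.
apply: contra M'g => lt_n_bK; apply: (subsetP sAM); rewrite defA Hg.
apply/forall_inP=> k fk.
apply: (commg_mem_of_bK_le p_pr pG sf'f (normal_sub nsfG) nBG) fk.
  exact: leq_trans (bound g Hg avoids_g) lt_n_bK.
by move=> k' f'k'; apply: mem_commg.
Qed.

Lemma exists_join_descent H M C : H <| G -> M <| G -> M \subset H -> #|H : M| = p ->
    proper_normal_family H C ->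
  exists N (C' : nat -> {group gT}),
    [/\ N <| G, N \subset H, (logn p #|H : N| <= 1)%N, proper_normal_family N C' &
        forall g, g \in N -> avoids p C' g -> g \notin M /\ avoids p C g].
Proof.
move=> nsHG nsMG sMH iHM famC; have [sHG _] := andP nsHG; have pH := pgroupS sHG pG.
have lt1p : (0 < 1 < p)%N by rewrite prime_gt1.
have [nsC1G ltC1H] := famC 1%N lt1p.
have [Y [nsYG sC1Y sYH iHY]] := normal_index_prime_between p_pr pG nsHG nsC1G ltC1H.
have ltMH : M \proper H by rewrite properE sMH -indexg_gt1 iHM prime_gt1.
have ltYH : Y \proper H by rewrite properE sYH -indexg_gt1 iHY prime_gt1.
pose D i := if i == 1%N then Y else C i.
have [|x /setDP[Hx M'x] avoids_x] := exists_avoids p_pr pH ltMH (C := D).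
  by move=> i lt_i; rewrite /D; case: eqP => // _; case: (famC i lt_i).
have Y'x : x \notin Y by have := avoids_x 1%N lt1p; rewrite /D eqxx.
pose W := (M :&: Y)%G; pose N := (W <*> <[x]>)%G.
have nMH := subset_trans sHG (normal_norm nsMG).
have nYH := subset_trans sHG (normal_norm nsYG).
have capW : N :&: (M :|: Y) \subset W :=
  join_cycle_cap_index_prime p_pr nMH nYH iHM iHY Hx M'x Y'x.
have sWN : W \subset N := joing_subl _ _.
have Nx : x \in N := subsetP (joing_subr _ _) x (cycle_id x).
have sNH : N \subset H by rewrite join_subG cycle_subG Hx (subset_trans (subsetIl _ _) sMH).
have nsNG : N <| G.
  apply: commg_sub_normal sHG _ sNH; apply: subset_trans sWN.
  by rewrite subsetI !(index_prime_commg_sub p_pr pG nsHG).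
pose C' i := if i == 1%N then W else (N :&: C i)%G.
exists N, C'; split=> //.
- exact: (logn_index_join_cycle p_pr pG sHG sMH iHM iHY Hx M'x).
- move=> i lt_i; rewrite /C'; case: eqP => [_ | /eqP i_ne1].
    split; first exact: normalI.
    by rewrite properE sWN; apply/subsetPn; exists x; rewrite // inE (negbTE M'x).
  have [nsCG _] := famC i lt_i; split; first exact: normalI.
  rewrite properE subsetIl; apply/subsetPn; exists x; rewrite // inE Nx.
  by have := avoids_x i lt_i; rewrite /D (negbTE i_ne1).
move=> g Ng avoids'_g.
have W'g : g \notin W by have := avoids'_g 1%N lt1p; rewrite /C' eqxx.
have : g \notin M :|: Y by apply: contra W'g => MYg; apply: (subsetP capW); rewrite inE Ng.
rewrite inE negb_or => /andP[M'g Y'g]; split=> // i lt_i.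
have [-> | i_ne1] := eqVneq i 1%N; first exact: contra (subsetP sC1Y g) Y'g.
by have := avoids'_g i lt_i; rewrite /C' (negbTE i_ne1) inE Ng.
Qed.

Lemma exists_clf_le_subgroup n m H C : (0 < m)%N -> H <| G -> proper_normal_family H C ->
    bK_bounded n m H C ->
  exists N : {group gT}, [/\ N <| G, N \subset H, (logn p #|H : N| <= n)%N,
    clf_le G f N (n + m) & exists2 x, x \in N & avoids p C x].
Proof.
elim: n m H C => [|n IHn] m H C m_gt0 nsHG famC bound.
  have cHf := central_of_bK_bounded0 m_gt0 nsHG famC bound.
  by apply: exists_clf_le_subgroup_central nsHG famC cHf; rewrite m_gt0 leq_addl.
have [cHf | not_cHf] := boolP (f H m \subset 'C_G(H)).
  by apply: exists_clf_le_subgroup_central nsHG famC cHf; rewrite m_gt0 leq_addl.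
have [f_normal f_mono _] := fG.
have [M [nsMG sMH iHM boundM]] := exists_index_prime_bK_drop m_gt0 nsHG bound not_cHf.
have [N [C' [nsNG sNH logHN famC' avoidsN]]] := exists_join_descent nsHG nsMG sMH iHM famC.
have boundN : bK_bounded n m.+1 N C'.
  move=> g Ng avoids'_g; have [M'g avoids_g] := avoidsN g Ng avoids'_g.
  have sfNfH : f N m.+1 \subset f H m.+1.
    exact: f_mono N H m.+1 m.+1 nsNG nsHG sNH isT (leqnn _).
  have sfHG := normal_sub (f_normal H m.+1 nsHG isT).
  apply: leq_trans (bKS p_pr g pG sfNfH sfHG) (boundM g _ avoids_g).
  by rewrite inE M'g (subsetP sNH).
have [L [nsLG sLN logNL clfL [y Ly avoids'_y]]] := IHn m.+1 N C' isT nsNG famC' boundN.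
exists L; split=> //; first exact: subset_trans sLN sNH.
- rewrite -(Lagrange_index sNH sLN) lognM ?indexg_gt0 //.
  by rewrite -add1n leq_add.
- by rewrite addSnnS.
by exists y => //; have [] := avoidsN y (subsetP sLN y Ly) avoids'_y.
Qed.

End ClassBound.

Theorem theorem1 (gT : finGroupType) (p n m : nat) (G : {group gT})
    (f : {group gT} -> nat -> {group gT}) (H : {group gT})
    (C : nat -> {group gT}) :
  prime p -> 2 < p -> (0 < m)%N -> p.-group G -> in_FG G f ->
  H <| G ->
  (forall i, (0 < i < p)%N -> C i <| G) ->
  (forall i, (0 < i < p)%N -> C i \proper H) ->
  (forall g, g \in H -> (forall i, (0 < i < p)%N -> g \notin C i) ->
     (bK p G (f H m) g <= n)%N) ->
  exists N : {group gT},
    [/\ N <| G, N \subset H, (logn p #|H : N| <= n)%N, clf_le G f N (n + m)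
      & exists2 x, x \in N & forall i, (0 < i < p)%N -> x \notin C i].
Proof.
move=> p_pr _ m_gt0 pG fG nsHG nsCG ltCH bound.
have famC : proper_normal_family p G H C by move=> i lt_i; split; [exact: nsCG | exact: ltCH].
exact: (exists_clf_le_subgroup p_pr pG fG (n := n) m_gt0 nsHG famC bound).
Qed.
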